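(* If $n > k \geq s \geq 0$ are integers, then there exists no $(n,k,s,s)$-oriented graph.
   Context: An oriented graph is a digraph with no loops and no pair of symmetric arcs. For vertices $u,v$ write $u(1\text{-}0)v$ if there is an arc from $u$ to $v$, and $u(0\text{-}0)v$ if there is no arc between $u$ and $v$. A vertex $v$ is weakly reachable within two steps from $u$ if $u(1\text{-}0)v$, or $u(0\text{-}0)v$, or for some vertex $w$ one has $u(1\text{-}0)w(1\text{-}0)v$, or $u(1\text{-}0)w(0\text{-}0)v$, or $u(0\text{-}0)w(1\text{-}0)v$. A vertex $u$ is a weak king if every other vertex is weakly reachable within two steps from $u$, and a weak serf if $u$ is weakly reachable within two steps from every other vertex. An $(n,k,s,b)$-oriented graph is an oriented graph on $n$ vertices with exactly $k$ weak kings and exactly $s$ weak serfs, such that exactly $b$ of the weak kings are also weak serfs. *)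

From mathcomp Require Import all_boot.
Set Implicit Arguments. Unset Strict Implicit. Unset Printing Implicit Defensive.

Section OrientedGraphs.
Variable T : finType.
Variable arc : rel T.

Definition oriented : Prop :=
  (forall u, ~~ arc u u) /\ (forall u v, arc u v -> ~~ arc v u).

Definition a10 (u v : T) : bool := arc u v.
Definition a00 (u v : T) : bool := ~~ arc u v && ~~ arc v u.

Definition weakly_reach2 (u v : T) : bool :=
  [|| a10 u v, a00 u v |
      [exists w, [|| a10 u w && a10 w v, a10 u w && a00 w v |
                     a00 u w && a10 w v]]].

Definition weak_king (u : T) : bool :=
  [forall v, (v != u) ==> weakly_reach2 u v].

Definition weak_serf (u : T) : bool :=
  [forall v, (v != u) ==> weakly_reach2 v u].

Definition weak_kings : {set T} := [set u | weak_king u].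
Definition weak_serfs : {set T} := [set u | weak_serf u].

Definition is_nksb_graph (n k s b : nat) : Prop :=
  oriented /\ #|T| = n /\ #|weak_kings| = k /\ #|weak_serfs| = s /\
  #|weak_kings :&: weak_serfs| = b.
End OrientedGraphs.

From mathcomp Require Import all_boot.
Set Implicit Arguments. Unset Strict Implicit. Unset Printing Implicit Defensive.

(* A vertex u fails to weakly reach v within two steps exactly when v dominates
   u: v -> u, every out-neighbour of u is one of v, and every in-neighbour of v
   is one of u.  Hence the non-kings are the dominated vertices and the
   non-serfs the dominating ones.  A dominating vertex has strictly larger
   out-degree than the vertex it dominates, so a non-king of minimal out-degree
   dominates nobody: it is a serf that is not a king.  In an
   (n,k,s,s)-oriented graph every serf is a king, and k < n provides a
   non-king, a contradiction. *)

Section Domination.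
Variable T : finType.
Variable arc : rel T.
Hypothesis arc_irrefl : forall u, ~~ arc u u.
Hypothesis arc_asym : forall u v, arc u v -> ~~ arc v u.

Definition dominates (v u : T) : bool :=
  [&& arc v u, [forall w, arc u w ==> arc v w] & [forall w, arc w v ==> arc w u]].

Definition outdeg (u : T) : nat := #|[set w | arc u w]|.

Lemma arc_asymb u v : arc u v && arc v u = false.
Proof. by apply/negbTE/nandP; case: (boolP (arc u v)) => [/arc_asym|]; auto. Qed.

Lemma weakly_reach2N u v : ~~ weakly_reach2 arc u v = dominates v u.
Proof.
rewrite /weakly_reach2 /dominates /a10 /a00 !negb_or; apply/idP/idP.
- case/and3P=> nuv nuv00 /existsPn no2.
  apply/and3P; split.
  + by move: nuv nuv00; case: (arc v u); case: (arc u v).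
  + apply/forallP => w; move: (no2 w) (arc_asymb w v).
    by case: (arc u w); case: (arc w v); case: (arc v w).
  + apply/forallP => w; move: (no2 w) (arc_asymb w v) (arc_asymb u w).
    by case: (arc u w); case: (arc w v); case: (arc v w); case: (arc w u).
- case/and3P=> vu /forallP out /forallP inn.
  apply/and3P; split.
  + by move: (arc_asymb u v); rewrite vu; case: (arc u v).
  + by rewrite vu andbF.
  + apply/existsPn => w; move: (out w) (inn w) (arc_asymb w v) (arc_asymb u w).
    by case: (arc u w); case: (arc w v); case: (arc v w); case: (arc w u).
Qed.

Lemma dominates_neq v u : dominates v u -> v != u.
Proof. by case/andP=> vu _; apply: contraTneq vu => ->; apply: arc_irrefl. Qed.

Lemma weak_kingPn u : reflect (exists v, dominates v u) (~~ weak_king arc u).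
Proof.
apply: (iffP forallPn) => [[v]|[v dom_vu]].
  by rewrite negb_imply weakly_reach2N => /andP[_ dom_vu]; exists v.
by exists v; rewrite negb_imply weakly_reach2N dom_vu dominates_neq.
Qed.

Lemma weak_serfPn u : ~~ weak_serf arc u -> exists v, dominates u v.
Proof. by case/forallPn=> v; rewrite negb_imply weakly_reach2N => /andP[_]; exists v. Qed.

Lemma outdeg_dominates v u : dominates v u -> outdeg u < outdeg v.
Proof.
case/and3P=> vu /forallP out _; apply/proper_card/properP; split.
  by apply/subsetP => w; rewrite !inE; apply/implyP.
by exists u; rewrite !inE ?vu ?arc_irrefl.
Qed.

Lemma exists_weak_serf_not_king u :
  ~~ weak_king arc u -> exists2 m, weak_serf arc m & ~~ weak_king arc m.
Proof.
move=> notKu.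
case: (@arg_minnP _ u (fun x => ~~ weak_king arc x) outdeg notKu) => m notKm minm.
exists m => //; apply: contraT => /weak_serfPn[v dom_mv].
have notKv : ~~ weak_king arc v by apply/weak_kingPn; exists m.
by have := minm v notKv; rewrite leqNgt outdeg_dominates.
Qed.

End Domination.

Theorem theorem8 (n k s : nat) (hnk : k < n) (hks : s <= k) :
  forall (T : finType) (arc : rel T), ~ is_nksb_graph arc n k s s.
Proof.
move=> T arc [[irr asym] [cardT [cardK [cardS cardKS]]]].
have serfs_sub_kings : weak_serfs arc \subset weak_kings arc.
  by apply/setIidPr/eqP; rewrite eqEcard subsetIr cardKS cardS leqnn.
have : weak_kings arc \proper [set: T].
  by rewrite properEcard subsetT cardsT cardK cardT hnk.
case/properP=> _ [u _]; rewrite inE => notKu.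
have [m Sm notKm] := exists_weak_serf_not_king irr asym notKu.
by move/subsetP/(_ m): serfs_sub_kings; rewrite !inE Sm (negbTE notKm) => /(_ isT).
Qed.
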